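(* Let $T$ be a minimal homeomorphism of a compact metric space $(X,\delta)$, let $G$ be a locally compact second countable group and let $f\colon X\to G$ be continuous. Then for every $x\in X$ and every integer $n$, \[E_{T^n x}(f)=f(n,x)\cdot E_x(f)\cdot f(n,x)^{-1}.\]
   Context: The cocycle is defined by $f(n,x)=f(T^{n-1}x)\cdots f(Tx)f(x)$ for $n\ge1$, $f(0,x)=\mathbf{1}_G$, and $f(n,x)=f(-n,T^nx)^{-1}$ for $n<0$. It satisfies $f(k,T^lx)f(l,x)=f(k+l,x)$. The essential range at $x\in X$, denoted $E_x(f)$, is the set of $g\in G$ such that for every open neighbourhood $U$ of $g$ and every open neighbourhood $\mathcal O$ of $x$ there is an integer $n\neq0$ with $T^{-n}\mathcal O\cap\mathcal O\cap\{y: f(n,y)\in U\}\neq\varnothing$. *)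

From HB Require Import structures.
From mathcomp Require Import all_boot all_order all_algebra.
From mathcomp Require Import all_classical all_reals all_analysis.
Set Implicit Arguments. Unset Strict Implicit. Unset Printing Implicit Defensive.
Import Order.TTheory GRing.Theory Num.Theory.
Local Open Scope classical_set_scope.
Local Open Scope ring_scope.

Definition is_topological_group (G : topologicalType)
    (mul : G -> G -> G) (inv : G -> G) (one : G) : Prop :=
  (forall a b c, mul a (mul b c) = mul (mul a b) c) /\
  (forall a, mul one a = a) /\ (forall a, mul a one = a) /\
  (forall a, mul (inv a) a = one) /\ (forall a, mul a (inv a) = one) /\
  continuous (fun p : G * G => mul p.1 p.2) /\ continuous inv.

Definition is_lcsc_group (G : topologicalType)
    (mul : G -> G -> G) (inv : G -> G) (one : G) : Prop :=
  [/\ is_topological_group mul inv one, hausdorff_space G,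
      locally_compact [set: G] & @second_countable G].

Definition is_homeo_with_inverse (X : topologicalType) (T Tinv : X -> X) : Prop :=
  [/\ continuous T, continuous Tinv, cancel T Tinv & cancel Tinv T].

Definition Tpow (X : Type) (T Tinv : X -> X) (n : int) (x : X) : X :=
  match n with
  | Posz k => iter k T x
  | Negz k => iter k.+1 Tinv x
  end.

Definition minimal_homeo (X : topologicalType) (T : X -> X) : Prop :=
  forall A : set X, closed A -> T @^-1` A = A -> A = set0 \/ A = setT.

(* f(n,x) for n >= 0: f(T^{n-1}x) ... f(Tx) f(x), f(0,x) = 1 *)
Fixpoint cocycle_nat (X G : Type) (mul : G -> G -> G) (one : G)
    (T : X -> X) (f : X -> G) (n : nat) (x : X) : G :=
  match n with
  | 0 => one
  | k.+1 => mul (f (iter k T x)) (cocycle_nat mul one T f k x)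
  end.

Definition cocycle (X G : Type) (mul : G -> G -> G) (inv : G -> G) (one : G)
    (T Tinv : X -> X) (f : X -> G) (n : int) (x : X) : G :=
  match n with
  | Posz k => cocycle_nat mul one T f k x
  | Negz k => inv (cocycle_nat mul one T f k.+1 (Tpow T Tinv (Negz k) x))
  end.

Definition ess_range (X G : topologicalType) (mul : G -> G -> G) (inv : G -> G)
    (one : G) (T Tinv : X -> X) (f : X -> G) (x : X) : set G :=
  [set g | forall (U : set G) (O : set X), open U -> U g -> open O -> O x ->
     exists n : int, n != 0 /\
       exists y, O y /\ O (Tpow T Tinv n y) /\ U (cocycle mul inv one T Tinv f n y)].

From HB Require Import structures.
From mathcomp Require Import all_boot all_order all_algebra.
From mathcomp Require Import all_classical all_reals all_analysis.
From mathcomp Require Import zify.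
Set Implicit Arguments. Unset Strict Implicit. Unset Printing Implicit Defensive.
Import Order.TTheory GRing.Theory Num.Theory.
Local Open Scope classical_set_scope.
Local Open Scope ring_scope.

(* The cocycle identity gives f(m, T^n y) = f(n, T^m y) f(m, y) f(n, y)^-1.
   If y and T^m y are close to x, both outer factors are close to f(n, x), so
   a return of y near x with f(m, y) near g is a return of T^n y near T^n x
   with f(m, T^n y) near f(n, x) g f(n, x)^-1.  This gives one inclusion; the
   other is the same inclusion for -n at T^n x, as f(-n, T^n x) = f(n, x)^-1. *)

Section Tpow.
Variables (X : Type) (T Tinv : X -> X).
Hypotheses (TK : cancel T Tinv) (TinvK : cancel Tinv T).
Local Notation P := (Tpow T Tinv).

Lemma TpowD1 n x : P (n + 1) x = T (P n x).
Proof.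
case: n => [k|[|j]].
- by have -> : Posz k + 1 = Posz k.+1 by lia.
- by rewrite /= TinvK.
- have -> : Negz j.+1 + 1 = Negz j by rewrite !NegzE; lia.
  by rewrite /= TinvK.
Qed.

Lemma TpowD a b x : P (a + b) x = P a (P b x).
Proof.
elim/int_rect: a => [|k IHk|k IHk]; first by rewrite add0r.
- have -> : Posz k.+1 = Posz k + 1 by lia.
  by rewrite addrAC !TpowD1 IHk.
- apply: (can_inj TK); rewrite -!TpowD1 addrAC.
  have -> : - (k.+1%:Z) + 1 = - (k%:Z) by lia.
  exact: IHk.
Qed.

Lemma TpowC m n x : P m (P n x) = P n (P m x).
Proof. by rewrite -!TpowD addrC. Qed.

End Tpow.

Section Group.
Variables (G : Type) (mul : G -> G -> G) (inv : G -> G) (one : G).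
Hypothesis mulA : forall a b c, mul a (mul b c) = mul (mul a b) c.
Hypothesis mul1g : forall a, mul one a = a.
Hypothesis mulg1 : forall a, mul a one = a.
Hypothesis mulVg : forall a, mul (inv a) a = one.
Hypothesis mulgV : forall a, mul a (inv a) = one.

Lemma grp_lcancel a b c : mul a b = mul a c -> b = c.
Proof. by move=> eq_ab_ac; rewrite -(mul1g b) -(mul1g c) -(mulVg a) -!mulA eq_ab_ac. Qed.

Lemma grp_inv_unique a b : mul a b = one -> a = inv b.
Proof. by move=> ab1; rewrite -(mulg1 a) -(mulgV b) mulA ab1 mul1g. Qed.

Lemma grp_invK a : inv (inv a) = a.
Proof. by symmetry; apply: grp_inv_unique. Qed.

Lemma grp_invM a b : inv (mul a b) = mul (inv b) (inv a).
Proof.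
by symmetry; apply: grp_inv_unique; rewrite -mulA (mulA (inv a)) mulVg mul1g mulVg.
Qed.

Definition conjugate (c g : G) : G := mul (mul c g) (inv c).

Lemma conjugateK c g : conjugate c (conjugate (inv c) g) = g.
Proof. by rewrite /conjugate grp_invK !mulA mulgV mul1g -mulA mulgV mulg1. Qed.

Section Cocycle.
Variables (X : Type) (T Tinv : X -> X) (f : X -> G).
Hypotheses (TK : cancel T Tinv) (TinvK : cancel Tinv T).
Local Notation P := (Tpow T Tinv).
Local Notation C := (cocycle mul inv one T Tinv f).

Lemma cocycle_natSr k y :
  cocycle_nat mul one T f k.+1 y = mul (cocycle_nat mul one T f k (T y)) (f y).
Proof.
elim: k y => [|k IHk] y; first by rewrite /= mul1g mulg1.
change (mul (f (iter k.+1 T y)) (cocycle_nat mul one T f k.+1 y) =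
        mul (cocycle_nat mul one T f k.+1 (T y)) (f y)).
by rewrite IHk mulA iterSr.
Qed.

Lemma cocycleD1 n x : C (n + 1) x = mul (f (P n x)) (C n x).
Proof.
case: n => [k|[|j]].
- by have -> : Posz k + 1 = Posz k.+1 by lia.
- by rewrite /= mulg1 mulgV.
- have -> : Negz j.+1 + 1 = Negz j by rewrite !NegzE; lia.
  have T_Tinv : T (iter j.+2 Tinv x) = iter j.+1 Tinv x := TinvK _.
  change (inv (cocycle_nat mul one T f j.+1 (iter j.+1 Tinv x)) =
    mul (f (iter j.+2 Tinv x)) (inv (cocycle_nat mul one T f j.+2 (iter j.+2 Tinv x)))).
  rewrite [cocycle_nat _ _ _ _ j.+2 _]cocycle_natSr T_Tinv [in RHS]grp_invM.
  by rewrite mulA mulgV mul1g.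
Qed.

Lemma cocycleD a b x : C (a + b) x = mul (C a (P b x)) (C b x).
Proof.
elim/int_rect: a => [|k IHk|k IHk]; first by rewrite add0r /= mul1g.
- have -> : Posz k.+1 = Posz k + 1 by lia.
  by rewrite addrAC !cocycleD1 IHk (TpowD TK TinvK) mulA.
- apply: (@grp_lcancel (f (P (- (k.+1%:Z) + b) x))).
  rewrite -cocycleD1 addrAC mulA (TpowD TK TinvK) -cocycleD1.
  have -> : - (k.+1%:Z) + 1 = - (k%:Z) by lia.
  exact: IHk.
Qed.

Lemma cocycle_comm m n y :
  C m (P n y) = mul (mul (C n (P m y)) (C m y)) (inv (C n y)).
Proof.
have := cocycleD m n y; rewrite addrC cocycleD => eq_mn.
by rewrite eq_mn -mulA mulgV mulg1.
Qed.

Lemma cocycleN n x : C (- n) (P n x) = inv (C n x).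
Proof. by apply: grp_inv_unique; rewrite -cocycleD addNr. Qed.

End Cocycle.

End Group.

Lemma continuous2_comp (Y A B D : topologicalType) (op : A -> B -> D)
    (a : Y -> A) (b : Y -> B) :
  continuous (fun p : A * B => op p.1 p.2) -> continuous a -> continuous b ->
  continuous (fun y => op (a y) (b y)).
Proof.
move=> op_cont a_cont b_cont y.
by apply: continuous2_cvg; [exact: (op_cont (a y, b y)) | exact: a_cont | exact: b_cont].
Qed.

Lemma continuous_iter (Y : topologicalType) (g : Y -> Y) k :
  continuous g -> continuous (iter k g).
Proof.
move=> g_cont; elim: k => [|k IHk] y /=; first exact: cvg_id.
exact: (continuous_comp (IHk y) (g_cont _)).
Qed.

Lemma continuous_Tpow (Y : topologicalType) (T Tinv : Y -> Y) n :
  continuous T -> continuous Tinv -> continuous (Tpow T Tinv n).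
Proof. by move=> T_cont Tinv_cont; case: n => k; apply: continuous_iter. Qed.

Lemma continuous_cocycle (X G : topologicalType) (mul : G -> G -> G)
    (inv : G -> G) (one : G) (T Tinv : X -> X) (f : X -> G) n :
  continuous (fun p : G * G => mul p.1 p.2) -> continuous inv ->
  continuous T -> continuous Tinv -> continuous f ->
  continuous (cocycle mul inv one T Tinv f n).
Proof.
move=> mul_cont inv_cont T_cont Tinv_cont f_cont.
have cn_cont k : continuous (cocycle_nat mul one T f k).
  elim: k => [|k IHk] /=; first exact: cst_continuous.
  apply: continuous2_comp => // y.
  by apply: continuous_comp; [exact: continuous_iter | exact: f_cont].
rewrite /cocycle; case: n => k; first exact: cn_cont.
move=> y; apply: continuous_comp; last exact: inv_cont.
by apply: continuous_comp; [exact: continuous_Tpow | exact: cn_cont].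
Qed.

Lemma continuous_mul_mulV (G : topologicalType) (mul : G -> G -> G) (inv : G -> G) :
  continuous (fun p : G * G => mul p.1 p.2) -> continuous inv ->
  continuous (fun p : G * G * G => mul (mul p.1.1 p.1.2) (inv p.2)).
Proof.
move=> mul_cont inv_cont.
have fst_cont (A B : topologicalType) : continuous (@fst A B) by move=> ?; exact: cvg_fst.
have snd_cont (A B : topologicalType) : continuous (@snd A B) by move=> ?; exact: cvg_snd.
apply: continuous2_comp => // [|p].
- apply: continuous2_comp => // p.
  + exact: (continuous_comp (fst_cont _ _ p) (fst_cont _ _ _)).
  + exact: (continuous_comp (fst_cont _ _ p) (snd_cont _ _ _)).
- exact: (continuous_comp (snd_cont _ _ p) (inv_cont _)).
Qed.

Section EssentialRange.
Variables (X G : topologicalType) (mul : G -> G -> G) (inv : G -> G) (one : G)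
  (T Tinv : X -> X) (f : X -> G).
Local Notation P := (Tpow T Tinv).
Local Notation C := (cocycle mul inv one T Tinv f).
Local Notation E := (ess_range mul inv one T Tinv f).

Lemma ess_range_nbhs x g U O : E x g -> nbhs g U -> nbhs x O ->
  exists n : int, n != 0 /\ exists y, O y /\ O (P n y) /\ U (C n y).
Proof.
move=> Exg; rewrite !nbhsE => -[V [V_open Vg] VU] [Q [Q_open Qx] QO].
have [n [n0 [y [Qy [QPy VCy]]]]] := Exg V Q V_open Vg Q_open Qx.
by exists n; split=> //; exists y; do !split; [exact: QO | exact: QO | exact: VU].
Qed.

Hypotheses (Ggrp : is_topological_group mul inv one)
  (Thomeo : is_homeo_with_inverse T Tinv) (f_cont : continuous f).

Lemma ess_range_conjugate x n g : E x g -> E (P n x) (conjugate mul inv (C n x) g).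
Proof.
have [mulA [mul1g [mulg1 [mulVg [mulgV [mul_cont inv_cont]]]]]] := Ggrp.
have [T_cont Tinv_cont TK TinvK] := Thomeo.
have mulV_cont := continuous_mul_mulV mul_cont inv_cont.
have P_cont : continuous (P n) := continuous_Tpow T_cont Tinv_cont.
have C_cont : continuous (C n) :=
  continuous_cocycle mul_cont inv_cont T_cont Tinv_cont f_cont.
move=> Exg U O U_open Ucgc O_open OPx; set c := C n x.
have := mulV_cont ((c, g), c) U (open_nbhs_nbhs (conj U_open Ucgc)).
case=> -[W V3] [[[V1 V2] [/= V1c V2g] V12W] /= V3c] WV3U.
pose O' := P n @^-1` O `&` C n @^-1` (V1 `&` V3).
have O'x : nbhs x O'.
  apply: filterI; first exact: P_cont x _ (open_nbhs_nbhs (conj O_open OPx)).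
  exact: C_cont x _ (filterI V1c V3c).
have [m [m0 [y [[Oy [V1y V3y]] [[OPy [V1Py _]] V2y]]]]] := ess_range_nbhs Exg V2g O'x.
exists m; split => //; exists (P n y); split => //; split.
  by rewrite (TpowC TK TinvK).
rewrite (cocycle_comm mulA mul1g mulg1 mulVg mulgV f TK TinvK).
by apply: (WV3U ((_, _), _)); split => //=; apply: (V12W (_, _)).
Qed.

End EssentialRange.

Theorem lemma1p1 (R : realType) (X : metricType R) (T Tinv : X -> X)
    (G : topologicalType) (mul : G -> G -> G) (inv : G -> G) (one : G)
    (f : X -> G) :
  compact [set: X] ->
  is_homeo_with_inverse T Tinv ->
  minimal_homeo T ->
  is_lcsc_group mul inv one ->
  continuous f ->
  forall (x : X) (n : int),
    ess_range mul inv one T Tinv f (Tpow T Tinv n x) =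
    [set mul (mul (cocycle mul inv one T Tinv f n x) g)
             (inv (cocycle mul inv one T Tinv f n x)) | g in
       ess_range mul inv one T Tinv f x].
Proof.
move=> _ Thomeo _ [Ggrp _ _ _] f_cont x n.
have [mulA [mul1g [mulg1 [mulVg [mulgV _]]]]] := Ggrp.
have [_ _ TK TinvK] := Thomeo.
rewrite eqEsubset; split=> [h Eh | _ [g Eg <-]]; last exact: ess_range_conjugate.
have := ess_range_conjugate Ggrp Thomeo f_cont (n := - n) Eh.
rewrite -(TpowD TK TinvK) addNr (cocycleN mulA mul1g mulg1 mulVg mulgV f TK TinvK).
move=> E_conj; exists (conjugate mul inv (inv (cocycle mul inv one T Tinv f n x)) h) => //.
exact: (conjugateK mulA mul1g mulg1 mulgV).
Qed.
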